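(* Fix an integer $d\ge 0$ and for $m\ge 0$ let $$a_m=\sum_{j=0}^{\lfloor (m+2)/2\rfloor} S(j,d,m+2-2j).$$ Then $a_0=d$, $a_1=d+1$, and $a_m=a_{m-1}+a_{m-2}$ for all $m\ge 2$ (so the sequence is $d,\ d+1,\ 2d+1,\ 3d+2,\ 5d+3,\ 8d+5,\dots$).
   Context: Binomial convention: for integers $M,m$, $\binom{M}{m}=\frac{M!}{m!(M-m)!}$ if $0\le m\le M$, and $\binom{M}{m}=0$ otherwise (in particular whenever $M<0$ or $m<0$ or $m>M$). For nonnegative integers $v,d,n$ the hypersolid number is defined by $$S(v,d,n)=\binom{v+n-2}{v-1}+d\binom{v+n-2}{v}.$$ *)

From mathcomp Require Import all_boot all_order all_algebra.
Set Implicit Arguments. Unset Strict Implicit. Unset Printing Implicit Defensive.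

(* Binomial coefficient with integer arguments:
   binZ M m = M!/(m!(M-m)!) if 0 <= m <= M, and 0 otherwise. *)
Definition binZ (M m : int) : nat :=
  match M, m with
  | Posz M', Posz m' => 'C(M', m')
  | _, _ => 0
  end.

Definition S (v d n : nat) : nat :=
  binZ (v%:Z + n%:Z - 2)%R (v%:Z - 1)%R + d * binZ (v%:Z + n%:Z - 2)%R v%:Z.

(* a_m = sum_{j=0}^{floor((m+2)/2)} S(j, d, m+2-2j)  (m+2-2j >= 0 in range) *)
Definition a_seq (d m : nat) : nat :=
  \sum_(0 <= j < ((m + 2) %/ 2).+1) S j d (m + 2 - 2 * j).

From mathcomp Require Import all_boot all_order all_algebra zify.

(* The sequence a_m is d times the Fibonacci sequence shifted by one plus the
   Fibonacci sequence itself:  a_m = fib m + d * fib (m + 1).  From this closed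
   form the three claims are immediate (fib 0 = 0, fib 1 = fib 2 = 1, and the
   Fibonacci recurrence is linear).

   The closed form rests on two facts.
   - Evaluation of the hypersolid numbers: whenever v + n = k + 2 (so that the
     integer binomials have a nonnegative top), S(v,d,n) = C(k,v-1) + d C(k,v),
     the first summand being absent for v = 0.  For j in the summation range of
     a_m (m >= 1) this gives S(j,d,m+2-2j) = C(m-j,j-1) + d C(m-j,j).
   - The classical diagonal identity for Pascal's triangle:
     sum_j C(m-j, j) = fib (m + 1), for any range of j long enough to contain
     every nonzero term (the terms vanish as soon as 2j > m). *)

Fixpoint fib (n : nat) : nat :=
  match n with
  | 0 => 0
  | 1 => 1
  | (n'.+1 as n1).+1 => fib n1 + fib n'
  end.

(* The defining recurrence, as a rewrite rule that does not unfold fib further. *)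
Lemma fibSS (n : nat) : fib n.+2 = fib n.+1 + fib n.
Proof. by []. Qed.

(* Pascal's rule along a diagonal, valid also when i > n (both sides vanish). *)
Lemma bin_diag_pascal (n i : nat) :
  'C(n.+1 - i, i.+1) = 'C(n - i, i.+1) + 'C(n - i, i).
Proof.
have [le_in | lt_ni] := leqP i n; first by rewrite subSn // binS.
have -> : n.+1 - i = 0 by lia.
have -> : n - i = 0 by lia.
by rewrite !bin0n; case: i lt_ni.
Qed.

(* Fibonacci numbers are the shallow diagonal sums of Pascal's triangle;
   any number N of terms with m < 2 N captures all nonzero terms. *)
Lemma fib_bin_diag (m N : nat) :
  m < 2 * N -> \sum_(0 <= j < N) 'C(m - j, j) = fib m.+1.
Proof.
elim/ltn_ind: m N => m IHm [|N] mN; first by lia.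
rewrite big_nat_recl // subn0 bin0.
case: m IHm mN => [|[|n]] IHm mN.
- by rewrite big1 // => j _; rewrite sub0n bin0n.
- by rewrite big1 // => j _; rewrite subSS sub0n bin0n.
under eq_bigr => j _ do rewrite subSS bin_diag_pascal.
rewrite big_split addnA fibSS -(IHm n _ N) //; last by lia.
congr (_ + _); rewrite -(IHm n.+1 _ N.+1) //; last by lia.
by rewrite [in RHS]big_nat_recl // subn0 bin0.
Qed.

Lemma S_top (v d n k : nat) : v + n = k + 2 ->
  S v d n = (if v is i.+1 then 'C(k, i) else 0) + d * 'C(k, v).
Proof.
move=> vnk; rewrite /S -PoszD vnk.
have -> : (Posz (k + 2) - 2 = Posz k)%R by rewrite PoszD GRing.addrK.
by case: v vnk => [|i] _ //=; rewrite subn1.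
Qed.

(* Closed form for m = k + 1 >= 1: every index j <= (m + 2) / 2 satisfies
   j <= m, so each summand of a_m is an ordinary binomial expression, and the
   two resulting diagonal sums are fib m and fib (m + 1). *)
Lemma a_seq_S (d k : nat) : a_seq d k.+1 = fib k.+1 + d * fib k.+2.
Proof.
rewrite /a_seq (@eq_big_nat _ _ _ _ _ _
  (fun j => (if j is i.+1 then 'C(k.+1 - j, i) else 0) + d * 'C(k.+1 - j, j)));
  last by move=> j /andP [_ lt_j]; apply: S_top; lia.
rewrite big_split /= -big_distrr (@fib_bin_diag k.+1); last by lia.
rewrite big_nat_recl // add0n; congr (_ + _).
under eq_bigr => j _ do rewrite subSS.
by rewrite fib_bin_diag //; lia.
Qed.

Lemma a_seq_fib (d m : nat) : a_seq d m = fib m + d * fib m.+1.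
Proof.
case: m => [|k]; last exact: a_seq_S.
rewrite /a_seq /S /= !big_nat_recr //= big_geq //=.
by rewrite bin0; lia.
Qed.

Theorem corollary5 (d : nat) :
  a_seq d 0 = d /\ a_seq d 1 = d + 1 /\
  (forall m : nat, 2 <= m -> a_seq d m = a_seq d (m - 1) + a_seq d (m - 2)).
Proof.
rewrite !a_seq_fib /=; split; first lia; split; first lia.
case=> [|[|k]] // _; rewrite subn1 subn2 /= !a_seq_fib !fibSS; lia.
Qed.
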